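(* As $N\to\infty$, $$\frac{1}{N}\sum_{n\le N} R_3(n)\sim \frac{1}{2}\log^2 N .$$
   Context: For a positive integer $n$, $R_3(n)$ denotes the number of ordered triples $(x,y,z)$ of positive integers with $n = xyz + x + y + z$. *)

From Stdlib Require Import Reals Arith List.
Import ListNotations.
Open Scope R_scope.

(* R_3(n) = #{(x,y,z) in Z_{>0}^3 : n = xyz + x + y + z}.
   Any solution has 1 <= x,y,z <= n, so it suffices to range over [1..n]. *)
Definition R3 (n : nat) : nat :=
  list_sum (map (fun x =>
    list_sum (map (fun y =>
      list_sum (map (fun z =>
        if Nat.eqb n (x * y * z + x + y + z)%nat then 1%nat else 0%nat)
        (seq 1 n)))
      (seq 1 n)))
    (seq 1 n)).

Definition sumR3 (N : nat) : nat := list_sum (map R3 (seq 1 N)).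

From Stdlib Require Import Reals Arith List Lia Lra.
Open Scope R_scope.

(* Summing R_3(n) over n <= N counts the triples (x,y,z) of positive integers
   with xyz + x + y + z <= N.  Since xyz <= xyz + x + y + z <= (x+1)(y+1)(z+1) - 1,
   this count lies between the number of triples with (x+1)(y+1)(z+1) <= N + 1
   and the number with xyz <= N.  Counting z first, both are double sums of
   floors sum_{x,y} N/(xy) up to O(N log N), and
   sum_{x <= N} (N/x) log(N/x) = N (log N)^2 / 2 + O(N log N) by the elementary
   estimates H(n) = log n + O(1) and sum_{a <= n} (log a)/a = (log n)^2/2 + O(1). *)

Section NatSums.
Local Open Scope nat_scope.

Lemma list_sum_map_ext (f g : nat -> nat) l :
  (forall x, In x l -> f x = g x) -> list_sum (map f l) = list_sum (map g l).
Proof. intros; f_equal; apply map_ext_in; auto. Qed.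

Lemma list_sum_map_le (f g : nat -> nat) l :
  (forall x, In x l -> f x <= g x) -> list_sum (map f l) <= list_sum (map g l).
Proof.
  induction l as [|a l IH]; simpl; intros Hfg; [lia|].
  pose proof (Hfg a (or_introl eq_refl)).
  pose proof (IH (fun x h => Hfg x (or_intror h))). lia.
Qed.

Lemma list_sum_map_zero (f : nat -> nat) l :
  (forall x, In x l -> f x = 0) -> list_sum (map f l) = 0.
Proof. induction l; simpl; intros Hf; auto. rewrite Hf, IHl; auto. Qed.

Lemma list_sum_map_add (f g : nat -> nat) l :
  list_sum (map (fun x => f x + g x) l) = list_sum (map f l) + list_sum (map g l).
Proof. induction l; simpl; auto. rewrite IHl; lia. Qed.

Lemma list_sum_map_comm (g : nat -> nat -> nat) l1 l2 :
  list_sum (map (fun a => list_sum (map (fun b => g a b) l2)) l1) =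
  list_sum (map (fun b => list_sum (map (fun a => g a b) l1)) l2).
Proof.
  induction l1; simpl.
  - symmetry; apply list_sum_map_zero; auto.
  - rewrite IHl1, <- list_sum_map_add. reflexivity.
Qed.

Lemma list_sum_map_seq_trunc (f : nat -> nat) K N :
  K <= N -> (forall y, K < y -> f y = 0) ->
  list_sum (map f (seq 1 N)) = list_sum (map f (seq 1 K)).
Proof.
  intros HKN Hf. induction N.
  - replace K with 0 by lia. reflexivity.
  - destruct (Nat.eq_dec K (S N)) as [->|]; auto.
    rewrite seq_S, map_app, list_sum_app, IHN by lia. simpl.
    rewrite Hf by lia. lia.
Qed.

Lemma count_seq_eq m N : 1 <= m ->
  list_sum (map (fun n => if n =? m then 1 else 0) (seq 1 N)) = if m <=? N then 1 else 0.
Proof.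
  intros Hm. induction N.
  - simpl. destruct (m <=? 0) eqn:E; auto. apply Nat.leb_le in E; lia.
  - rewrite seq_S, map_app, list_sum_app, IHN. cbn [map list_sum fold_right Nat.add].
    destruct (m <=? N) eqn:E1, (m <=? S N) eqn:E2, (S N =? m) eqn:E3;
    rewrite ?Nat.leb_le, ?Nat.leb_gt, ?Nat.eqb_eq, ?Nat.eqb_neq in *; lia.
Qed.

Lemma count_mul_le c M K : 1 <= c ->
  list_sum (map (fun z => if c * z <=? M then 1 else 0) (seq 1 K)) = Nat.min K (M / c).
Proof.
  intros Hc.
  assert (Hq : forall q, c * q <= M <-> q <= M / c).
  { intros q. split; intros.
    - apply Nat.div_le_lower_bound; lia.
    - pose proof (Nat.div_mod M c ltac:(lia)).
      pose proof (Nat.mod_upper_bound M c ltac:(lia)). nia. }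
  induction K; auto.
  rewrite seq_S, map_app, list_sum_app, IHK. cbn [map list_sum fold_right Nat.add].
  destruct (c * S K <=? M) eqn:E; rewrite ?Nat.leb_le, ?Nat.leb_gt in E.
  - apply Hq in E. lia.
  - assert (~ S K <= M / c) by (rewrite <- Hq; lia). lia.
Qed.

Lemma count_mul_succ_le c M K : 1 <= c ->
  list_sum (map (fun z => if c * (z + 1) <=? M then 1 else 0) (seq 1 K))
  + (if c <=? M then 1 else 0) = Nat.min (S K) (M / c).
Proof.
  intros Hc. rewrite <- (count_mul_le c M (S K) Hc).
  rewrite (list_sum_map_ext (fun z => if c * (z + 1) <=? M then 1 else 0)
                            (fun z => if c * S z <=? M then 1 else 0))
    by (intros; rewrite Nat.add_1_r; reflexivity).
  change (seq 1 (S K)) with (1 :: seq 2 K).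
  replace (seq 2 K) with (map S (seq 1 K)) by apply seq_shift.
  cbn [map list_sum fold_right]. rewrite map_map, Nat.mul_1_r. unfold list_sum. lia.
Qed.

Definition triple_count (N : nat) : nat :=
  list_sum (map (fun x => list_sum (map (fun y => list_sum (map (fun z =>
    if x * y * z + x + y + z <=? N then 1 else 0)
    (seq 1 N))) (seq 1 N))) (seq 1 N)).

Lemma R3_summand_zero n x y z : n < x + y + z ->
  (if n =? x * y * z + x + y + z then 1 else 0) = 0.
Proof. intros. destruct (n =? _) eqn:E; auto. apply Nat.eqb_eq in E; lia. Qed.

Lemma sumR3_triple_count N : sumR3 N = triple_count N.
Proof.
  unfold sumR3, R3, triple_count.
  rewrite (list_sum_map_ext _ (fun n => list_sum (map (fun x => list_sum (map (fun y =>
      list_sum (map (fun z => if n =? x * y * z + x + y + z then 1 else 0)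
      (seq 1 N))) (seq 1 N))) (seq 1 N)))).
  2:{ intros n Hn. apply in_seq in Hn. symmetry.
      rewrite (list_sum_map_seq_trunc _ n N) by (try lia; intros;
        apply list_sum_map_zero; intros; apply list_sum_map_zero; intros;
        apply R3_summand_zero; lia).
      apply list_sum_map_ext; intros x Hx. apply in_seq in Hx.
      rewrite (list_sum_map_seq_trunc _ n N) by (try lia; intros;
        apply list_sum_map_zero; intros; apply R3_summand_zero; lia).
      apply list_sum_map_ext; intros y Hy. apply in_seq in Hy.
      rewrite (list_sum_map_seq_trunc _ n N) by (try lia; intros;
        apply R3_summand_zero; lia).
      reflexivity. }
  rewrite list_sum_map_comm. apply list_sum_map_ext; intros x _.
  rewrite list_sum_map_comm. apply list_sum_map_ext; intros y _.
  rewrite list_sum_map_comm. apply list_sum_map_ext; intros z Hz.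
  apply in_seq in Hz. apply count_seq_eq. lia.
Qed.

Definition floor_sum2 (N : nat) : nat :=
  list_sum (map (fun x => list_sum (map (fun y => N / x / y) (seq 1 N))) (seq 1 N)).

(* Counts the (x,y,z) in [1,N]^3 with (x+1)(y+1)(z+1) <= N + 1. *)
Definition shifted_floor_sum2 (N : nat) : nat :=
  list_sum (map (fun x => list_sum (map (fun y =>
    S N / (x + 1) / (y + 1) - 1) (seq 1 N))) (seq 1 N)).

Lemma triple_count_le_floor_sum2 N : triple_count N <= floor_sum2 N.
Proof.
  unfold triple_count, floor_sum2.
  apply list_sum_map_le; intros x Hx; apply in_seq in Hx.
  apply list_sum_map_le; intros y Hy; apply in_seq in Hy.
  rewrite Nat.Div0.div_div.
  assert (Hxy : 1 <= x * y) by nia.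
  rewrite <- (Nat.min_r N (N / (x * y))) by (apply Nat.Div0.div_le_upper_bound; nia).
  rewrite <- (count_mul_le (x * y) N N Hxy).
  apply list_sum_map_le; intros z _.
  destruct (x * y * z + x + y + z <=? N) eqn:E; destruct (x * y * z <=? N) eqn:E2; auto.
  rewrite Nat.leb_le, Nat.leb_gt in *. lia.
Qed.

Lemma shifted_floor_sum2_le_triple_count N : shifted_floor_sum2 N <= triple_count N.
Proof.
  unfold triple_count, shifted_floor_sum2.
  apply list_sum_map_le; intros x Hx; apply in_seq in Hx.
  apply list_sum_map_le; intros y Hy; apply in_seq in Hy.
  rewrite Nat.Div0.div_div. set (c := (x + 1) * (y + 1)).
  pose proof (count_mul_succ_le c (S N) N ltac:(unfold c; nia)) as Hcount.
  rewrite Nat.min_r in Hcount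
    by (apply Nat.Div0.div_le_upper_bound; unfold c; nia).
  enough (list_sum (map (fun z => if c * (z + 1) <=? S N then 1 else 0) (seq 1 N)) <=
          list_sum (map (fun z => if x * y * z + x + y + z <=? N then 1 else 0) (seq 1 N)))
    by (destruct (c <=? S N); lia).
  apply list_sum_map_le; intros z _.
  destruct (x * y * z + x + y + z <=? N) eqn:E; destruct (c * (z + 1) <=? S N) eqn:E2; auto.
  rewrite Nat.leb_le, Nat.leb_gt in *. unfold c in *. nia.
Qed.

End NatSums.

Lemma ln_le_sub_1 y : 0 < y -> ln y <= y - 1.
Proof. intros Hy. pose proof (exp_ineq1_le (ln y)). rewrite exp_ln in H; lra. Qed.

Lemma ln_le x y : 0 < x -> x <= y -> ln x <= ln y.
Proof.
  intros Hx Hxy. destruct (Rle_lt_or_eq_dec _ _ Hxy) as [Hlt|<-]; [|lra].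
  left; apply ln_increasing; auto.
Qed.

Lemma ln_div x y : 0 < x -> 0 < y -> ln (x / y) = ln x - ln y.
Proof.
  intros. unfold Rdiv. rewrite ln_mult, ln_Rinv; try lra.
  apply Rinv_0_lt_compat; auto.
Qed.

Lemma ln_ge_0 x : 1 <= x -> 0 <= ln x.
Proof. intros. rewrite <- ln_1. apply ln_le; lra. Qed.

Lemma ln_succ_sub_bounds x : 1 <= x -> / (x + 1) <= ln (x + 1) - ln x <= / x.
Proof.
  intros Hx. split.
  - pose proof (ln_le_sub_1 (x / (x + 1)) ltac:(apply Rdiv_lt_0_compat; lra)) as H.
    rewrite ln_div in H by lra.
    assert (x / (x + 1) - 1 = - / (x + 1)) by (field; lra). lra.
  - pose proof (ln_le_sub_1 ((x + 1) / x) ltac:(apply Rdiv_lt_0_compat; lra)) as H.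
    rewrite ln_div in H by lra.
    assert ((x + 1) / x - 1 = / x) by (field; lra). lra.
Qed.

Lemma INR_ge_1 n : (1 <= n)%nat -> 1 <= INR n.
Proof. intros. apply (le_INR 1); auto. Qed.

Definition rsum (f : nat -> R) (l : list nat) : R := fold_right (fun a s => f a + s) 0 l.

Lemma rsum_app f l1 l2 : rsum f (l1 ++ l2) = rsum f l1 + rsum f l2.
Proof. induction l1; simpl; [lra|]. rewrite IHl1; lra. Qed.

Lemma rsum_seq_S f n : rsum f (seq 1 (S n)) = rsum f (seq 1 n) + f (S n).
Proof. rewrite seq_S, rsum_app. simpl. lra. Qed.

Lemma rsum_le f g l : (forall x, In x l -> f x <= g x) -> rsum f l <= rsum g l.
Proof.
  induction l as [|a l IH]; simpl; intros Hfg; [lra|].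
  pose proof (Hfg a (or_introl eq_refl)).
  pose proof (IH (fun x h => Hfg x (or_intror h))). lra.
Qed.

Lemma rsum_scal c f l : rsum (fun x => c * f x) l = c * rsum f l.
Proof. induction l; simpl; [lra|]. rewrite IHl; lra. Qed.

Lemma rsum_sub f g l : rsum (fun x => f x - g x) l = rsum f l - rsum g l.
Proof. induction l; simpl; [lra|]. rewrite IHl; lra. Qed.

Lemma rsum_const c l : rsum (fun _ => c) l = INR (length l) * c.
Proof.
  induction l; cbn [rsum fold_right length]; [simpl; lra|].
  fold (rsum (fun _ => c) l). rewrite IHl, S_INR; lra.
Qed.

Lemma rsum_seq_shift f n :
  rsum f (seq 1 (S n)) = f 1%nat + rsum (fun x => f (S x)) (seq 1 n).
Proof.
  cbn [seq]. rewrite <- seq_shift. cbn [rsum fold_right]. f_equal.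
  induction (seq 1 n); simpl; congruence.
Qed.

Lemma INR_list_sum (f : nat -> nat) l :
  INR (list_sum (map f l)) = rsum (fun x => INR (f x)) l.
Proof. induction l; simpl; [reflexivity|]. rewrite plus_INR, IHl. reflexivity. Qed.

Definition harmonic (n : nat) : R := rsum (fun a => / INR a) (seq 1 n).

Definition log_harmonic (n : nat) : R := rsum (fun a => ln (INR a) / INR a) (seq 1 n).

Lemma harmonic_le n : (1 <= n)%nat -> harmonic n <= 1 + ln (INR n).
Proof.
  induction n as [|n IH]; intros Hn; [lia|]. destruct n.
  - unfold harmonic. simpl. rewrite ln_1. lra.
  - unfold harmonic in *. rewrite rsum_seq_S. specialize (IH ltac:(lia)).
    pose proof (ln_succ_sub_bounds (INR (S n)) (INR_ge_1 (S n) ltac:(lia))).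
    rewrite (S_INR (S n)). lra.
Qed.

Lemma ln_succ_le_harmonic n : ln (INR n + 1) <= harmonic n.
Proof.
  induction n as [|n IH].
  - unfold harmonic. simpl. rewrite Rplus_0_l, ln_1. lra.
  - unfold harmonic in *. rewrite rsum_seq_S.
    pose proof (ln_succ_sub_bounds (INR (S n)) (INR_ge_1 (S n) ltac:(lia))).
    rewrite S_INR in *. lra.
Qed.

Lemma ln_sq_succ_sub_bounds x : 1 <= x ->
  ln x ^ 2 / 2 + ln (x + 1) / (x + 1) + / (x + 1) - / x <= ln (x + 1) ^ 2 / 2 <=
  ln x ^ 2 / 2 + ln (x + 1) / (x + 1) + / (x + 1).
Proof.
  intros Hx. pose proof (ln_succ_sub_bounds x Hx) as [Hb Ha].
  set (u := ln (x + 1)) in *. set (a := / x) in *. set (b := / (x + 1)) in *.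
  set (d := u - ln x) in *. replace (ln x) with (u - d) by (unfold d; ring).
  assert (Ha0 : 0 < a) by (unfold a; apply Rinv_0_lt_compat; lra).
  assert (Hb0 : 0 < b) by (unfold b; apply Rinv_0_lt_compat; lra).
  assert (Hab : a - b = a * b) by (unfold a, b; field; lra).
  assert (Hxa : a * x = 1) by (unfold a; field; lra).
  assert (Hu : 0 <= u) by (unfold u; apply ln_ge_0; lra).
  assert (Hux : u <= x) by (unfold u; pose proof (ln_le_sub_1 (x + 1)); lra).
  assert (Hau : a * u <= 1) by nra.
  unfold Rdiv. fold b. split.
  - assert (a <= 2 * b) by nra.
    assert (d * d <= a * a) by nra.
    assert (d * d <= 2 * a * b) by nra. nra.
  - assert (a * b * u <= b) by nra. nra.
Qed.

Lemma log_harmonic_le n : (1 <= n)%nat ->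
  log_harmonic n <= ln (INR n) ^ 2 / 2 + 1 - / INR n.
Proof.
  induction n as [|n IH]; intros Hn; [lia|]. destruct n.
  - unfold log_harmonic. simpl. rewrite ln_1. lra.
  - unfold log_harmonic in *. rewrite rsum_seq_S. specialize (IH ltac:(lia)).
    pose proof (ln_sq_succ_sub_bounds (INR (S n)) (INR_ge_1 (S n) ltac:(lia))).
    rewrite (S_INR (S n)). lra.
Qed.

Lemma log_harmonic_ge n : (1 <= n)%nat ->
  ln (INR n) ^ 2 / 2 - harmonic n <= log_harmonic n.
Proof.
  induction n as [|n IH]; intros Hn; [lia|]. destruct n.
  - unfold log_harmonic, harmonic. simpl. rewrite ln_1. lra.
  - unfold log_harmonic, harmonic in *. rewrite !(rsum_seq_S _ (S n)).
    specialize (IH ltac:(lia)).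
    pose proof (ln_sq_succ_sub_bounds (INR (S n)) (INR_ge_1 (S n) ltac:(lia))).
    rewrite (S_INR (S n)). lra.
Qed.

Lemma INR_div_bounds a b : (1 <= b)%nat ->
  INR (a / b) * INR b <= INR a < (INR (a / b) + 1) * INR b.
Proof.
  intros Hb. pose proof (Nat.div_mod a b ltac:(lia)).
  pose proof (Nat.mod_upper_bound a b ltac:(lia)). split.
  - rewrite <- mult_INR. apply le_INR. nia.
  - rewrite <- S_INR, <- mult_INR. apply lt_INR. nia.
Qed.

Lemma INR_div_le a b : (1 <= b)%nat -> INR (a / b) <= INR a / INR b.
Proof.
  intros Hb. destruct (INR_div_bounds a b Hb) as [H _].
  pose proof (INR_ge_1 b Hb). apply (Rmult_le_reg_r (INR b)); [lra|].
  unfold Rdiv. rewrite Rmult_assoc, Rinv_l; lra.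
Qed.

Lemma INR_div_gt a b : (1 <= b)%nat -> INR a / INR b - 1 < INR (a / b).
Proof.
  intros Hb. destruct (INR_div_bounds a b Hb) as [_ H].
  pose proof (INR_ge_1 b Hb).
  enough (INR a / INR b < INR (a / b) + 1) by lra.
  apply (Rmult_lt_reg_r (INR b)); [lra|].
  unfold Rdiv. rewrite Rmult_assoc, Rinv_l; lra.
Qed.

Lemma floor_harmonic_le K N : (K <= N)%nat ->
  INR (list_sum (map (fun y => K / y) (seq 1 N)))%nat <= INR K * (1 + ln (INR K)).
Proof.
  intros HK.
  rewrite (list_sum_map_seq_trunc _ K N HK) by (intros; apply Nat.div_small; lia).
  rewrite INR_list_sum.
  apply Rle_trans with (rsum (fun y => INR K * / INR y) (seq 1 K)).
  - apply rsum_le. intros y Hy. apply in_seq in Hy. apply INR_div_le; lia.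
  - rewrite rsum_scal. fold (harmonic K). destruct K as [|k].
    + simpl. lra.
    + pose proof (harmonic_le (S k) ltac:(lia)). pose proof (pos_INR (S k)). nra.
Qed.

Lemma floor_harmonic_shift_ge K N : (K <= S N)%nat ->
  INR K * ln (INR K) - 3 * INR K <=
  INR (list_sum (map (fun y => K / (y + 1) - 1) (seq 1 N)))%nat.
Proof.
  intros HK. destruct K as [|k].
  - simpl INR. rewrite Rmult_0_l, Rmult_0_r, Rminus_0_r. apply pos_INR.
  - rewrite (list_sum_map_seq_trunc _ k N ltac:(lia))
      by (intros; rewrite Nat.div_small by lia; lia).
    rewrite INR_list_sum.
    apply Rle_trans with (rsum (fun y => INR (S k) * / INR (S y) - 2) (seq 1 k)).
    2:{ apply rsum_le. intros y Hy. apply in_seq in Hy.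
        pose proof (INR_div_gt (S k) (y + 1) ltac:(lia)) as Hfl.
        rewrite Nat.add_1_r in *. unfold Rdiv in Hfl.
        destruct (Nat.eq_dec (S k / S y) 0) as [E|E].
        + rewrite E in *. simpl INR in *. lra.
        + rewrite minus_INR by lia. simpl (INR 1). lra. }
    rewrite rsum_sub, rsum_scal, rsum_const, length_seq.
    pose proof (rsum_seq_shift (fun a => / INR a) k) as Hshift. cbv beta in Hshift.
    fold (harmonic (S k)) in Hshift. simpl (INR 1) in Hshift. rewrite Rinv_1 in Hshift.
    pose proof (ln_succ_le_harmonic (S k)).
    assert (ln (INR (S k)) <= ln (INR (S k) + 1))
      by (apply ln_le; pose proof (INR_ge_1 (S k) ltac:(lia)); lra).
    pose proof (INR_ge_1 (S k) ltac:(lia)). rewrite S_INR in *. nra.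
Qed.

Lemma xlnx_floor_bound K t : 0 < t -> INR K <= t < INR K + 1 ->
  t * ln t - 5 * t <= INR K * ln (INR K) - 3 * INR K.
Proof.
  intros Ht [HKt HtK]. destruct K as [|k].
  - simpl in *. assert (ln t <= 0) by (pose proof (ln_le_sub_1 t Ht); lra). nra.
  - set (k1 := INR (S k)) in *.
    assert (Hk : 1 <= k1) by apply (INR_ge_1 (S k)), le_n_S, Nat.le_0_l.
    assert (Hlk : ln (t / 2) <= ln k1) by (apply ln_le; lra).
    rewrite ln_div in Hlk by lra.
    assert (ln 2 <= 1) by (pose proof (ln_le_sub_1 2); lra).
    assert (ln t <= t - 1) by (apply ln_le_sub_1; lra).
    assert (0 <= ln k1) by (apply ln_ge_0; lra).
    assert (0 <= ln 2) by (apply ln_ge_0; lra).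
    assert (k1 * ln k1 >= (t - 1) * ln k1) by nra.
    assert ((t - 1) * ln k1 >= (t - 1) * (ln t - ln 2)) by nra.
    nra.
Qed.

Lemma floor_sum2_le N : (1 <= N)%nat ->
  INR (floor_sum2 N) <= INR N * (1 + ln (INR N)) * harmonic N - INR N * log_harmonic N.
Proof.
  intros HN. unfold floor_sum2. rewrite INR_list_sum.
  apply Rle_trans with (rsum (fun x => INR N * (1 + ln (INR N)) * / INR x
                                       - INR N * (ln (INR x) / INR x)) (seq 1 N)).
  2:{ rewrite rsum_sub, !rsum_scal. apply Rle_refl. }
  apply rsum_le. intros x Hx. apply in_seq in Hx.
  eapply Rle_trans.
  { apply floor_harmonic_le. apply Nat.Div0.div_le_upper_bound. nia. }
  set (K := (N / x)%nat).
  assert (Hx0 : 1 <= INR x) by (apply INR_ge_1; lia).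
  assert (HxN : INR x <= INR N) by (apply le_INR; lia).
  set (t := INR N / INR x).
  assert (Ht1 : 1 <= t).
  { unfold t. apply (Rmult_le_reg_r (INR x)); [lra|].
    unfold Rdiv. rewrite Rmult_assoc, Rinv_l; lra. }
  assert (HKt : INR K <= t) by (apply INR_div_le; lia).
  replace (INR N * (1 + ln (INR N)) * / INR x - INR N * (ln (INR x) / INR x))
    with (t * (1 + ln t)) by (unfold t; rewrite ln_div by lra; field; lra).
  destruct (Nat.eq_dec K 0) as [E0|E0].
  - rewrite E0. simpl. pose proof (ln_ge_0 t Ht1). nra.
  - assert (1 <= INR K) by (apply INR_ge_1; lia).
    assert (ln (INR K) <= ln t) by (apply ln_le; lra).
    pose proof (ln_ge_0 (INR K) ltac:(lra)). nra.
Qed.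

Lemma shifted_floor_sum2_ge N :
  INR (S N) * (ln (INR (S N)) - 5) * (harmonic (S N) - 1)
  - INR (S N) * log_harmonic (S N) <= INR (shifted_floor_sum2 N).
Proof.
  unfold shifted_floor_sum2. rewrite INR_list_sum.
  apply Rle_trans with (rsum (fun x => INR (S N) * (ln (INR (S N)) - 5) * / INR (S x)
                              - INR (S N) * (ln (INR (S x)) / INR (S x))) (seq 1 N)).
  - rewrite rsum_sub, !rsum_scal.
    pose proof (rsum_seq_shift (fun a => / INR a) N) as Hh. cbv beta in Hh.
    pose proof (rsum_seq_shift (fun a => ln (INR a) / INR a) N) as Hg. cbv beta in Hg.
    fold (harmonic (S N)) in Hh. fold (log_harmonic (S N)) in Hg.
    simpl (INR 1) in Hh, Hg. rewrite Rinv_1 in Hh. rewrite ln_1, Rdiv_0_l in Hg.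
    rewrite Hh, Hg. lra.
  - apply rsum_le. intros x Hx. apply in_seq in Hx.
    eapply Rle_trans.
    2:{ apply floor_harmonic_shift_ge. apply Nat.Div0.div_le_upper_bound. nia. }
    set (K := (S N / (x + 1))%nat).
    assert (Hx0 : 1 <= INR (S x)) by (apply INR_ge_1; lia).
    assert (HM : 1 <= INR (S N)) by (apply INR_ge_1; lia).
    set (t := INR (S N) / INR (S x)).
    assert (Ht : 0 < t) by (apply Rdiv_lt_0_compat; lra).
    assert (Hfloor : INR K <= t < INR K + 1).
    { unfold t, K. replace (S x) with (x + 1)%nat by lia.
      pose proof (INR_div_le (S N) (x + 1) ltac:(lia)).
      pose proof (INR_div_gt (S N) (x + 1) ltac:(lia)). lra. }
    eapply Rle_trans; [|apply (xlnx_floor_bound K t Ht Hfloor)].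
    right. unfold t. rewrite ln_div by lra. field. lra.
Qed.

Lemma sumR3_le N : (1 <= N)%nat ->
  INR (sumR3 N) <= INR N * (ln (INR N) ^ 2 / 2 + 3 * ln (INR N) + 2).
Proof.
  intros HN. rewrite sumR3_triple_count.
  eapply Rle_trans; [apply le_INR, triple_count_le_floor_sum2|].
  eapply Rle_trans; [apply floor_sum2_le, HN|].
  pose proof (harmonic_le N HN). pose proof (log_harmonic_ge N HN).
  pose proof (INR_ge_1 N HN). pose proof (ln_ge_0 (INR N) ltac:(lra)).
  set (L := ln (INR N)) in *.
  assert (INR N * (L ^ 2 / 2 - harmonic N) <= INR N * log_harmonic N)
    by (apply Rmult_le_compat_l; lra).
  assert (INR N * (2 + L) * harmonic N <= INR N * (2 + L) * (1 + L))
    by (apply Rmult_le_compat_l; nra).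
  nra.
Qed.

Lemma sumR3_ge N : (1 <= N)%nat -> 12 <= ln (INR N) ->
  INR N * (ln (INR N) ^ 2 / 2 - 6 * ln (INR N)) <= INR (sumR3 N).
Proof.
  intros HN1 HL. rewrite sumR3_triple_count.
  eapply Rle_trans; [|apply le_INR, shifted_floor_sum2_le_triple_count].
  eapply Rle_trans; [|apply shifted_floor_sum2_ge].
  pose proof (INR_ge_1 N HN1).
  set (M := INR (S N)). set (L := ln (INR N)) in *. set (LM := ln M).
  assert (HM : M = INR N + 1) by apply S_INR.
  assert (HLM : L <= LM) by (apply ln_le; lra).
  pose proof (ln_succ_le_harmonic (S N)) as Hh. fold M in Hh.
  assert (LM <= ln (M + 1)) by (apply ln_le; lra).
  pose proof (log_harmonic_le (S N) ltac:(lia)) as Hg. fold M LM in Hg.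
  assert (0 < / M) by (apply Rinv_0_lt_compat; lra).
  assert ((LM - 5) * (LM - 1) <= (LM - 5) * (harmonic (S N) - 1)) by nra.
  assert (M * (LM ^ 2 / 2 - 6 * LM + 4) <=
          M * (LM - 5) * (harmonic (S N) - 1) - M * log_harmonic (S N)) by nra.
  assert (L ^ 2 / 2 - 6 * L <= LM ^ 2 / 2 - 6 * LM + 4) by nra.
  nra.
Qed.

Lemma Un_cv_div_half_ln_sq (u : nat -> R) (C L0 : R) :
  (forall N, (1 <= N)%nat -> L0 <= ln (INR N) ->
     Rabs (u N - ln (INR N) ^ 2 / 2) <= C * ln (INR N)) ->
  Un_cv (fun N => u N / (ln (INR N) ^ 2 / 2)) 1.
Proof.
  intros Hu eps Heps.
  set (K := Rmax (Rmax L0 1) (2 * C / eps)).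
  destruct (INR_archimed 1 (exp K) ltac:(lra)) as [N0 HN0].
  exists N0. intros N HN. unfold R_dist.
  assert (HNK : exp K < INR N).
  { pose proof (le_INR N0 N ltac:(lia)). lra. }
  assert (HN1 : (1 <= N)%nat).
  { destruct N; [|lia]. pose proof (exp_pos K). simpl in HNK. lra. }
  assert (HL : K < ln (INR N))
    by (rewrite <- (ln_exp K); apply ln_increasing; [apply exp_pos | lra]).
  assert (HK : Rmax L0 1 <= K /\ 2 * C / eps <= K) by (split; [apply Rmax_l | apply Rmax_r]).
  pose proof (Rmax_l L0 1). pose proof (Rmax_r L0 1). clearbody K.
  specialize (Hu N HN1 ltac:(lra)).
  set (L := ln (INR N)) in *.
  assert (HLpos : 0 < L) by (lra).
  assert (HCL : 2 * C < eps * L).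
  { assert (2 * C / eps * eps = 2 * C) by (field; lra). nra. }
  replace (u N / (L ^ 2 / 2) - 1) with ((u N - L ^ 2 / 2) * (2 / L ^ 2)) by (field; lra).
  rewrite Rabs_mult, (Rabs_pos_eq (2 / L ^ 2)) by (apply Rlt_le, Rdiv_lt_0_compat; nra).
  apply Rle_lt_trans with (C * L * (2 / L ^ 2)).
  - apply Rmult_le_compat_r; [apply Rlt_le, Rdiv_lt_0_compat; nra | exact Hu].
  - replace (C * L * (2 / L ^ 2)) with (2 * C / L) by (field; lra).
    apply (Rmult_lt_reg_r L); [lra|]. unfold Rdiv. rewrite Rmult_assoc, Rinv_l; lra.
Qed.

Theorem theorem1 :
  Un_cv (fun N : nat =>
           (INR (sumR3 N) / INR N) / ((ln (INR N)) ^ 2 / 2)) 1.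
Proof.
  apply (Un_cv_div_half_ln_sq _ 6 12). intros N HN HL.
  pose proof (sumR3_le N HN) as Hup. pose proof (sumR3_ge N HN HL) as Hlo.
  pose proof (INR_ge_1 N HN).
  set (L := ln (INR N)) in *. set (q := INR (sumR3 N) / INR N).
  assert (Hq : INR (sumR3 N) = INR N * q) by (unfold q; field; lra).
  rewrite Hq in Hup, Hlo.
  assert (L ^ 2 / 2 - 6 * L <= q <= L ^ 2 / 2 + 3 * L + 2) by (split; nra).
  apply Rabs_le. lra.
Qed.
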